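(* Let $(A_n)_{n\in\mathbb Z^+}$ be a sequence of invertible linear operators on $\mathbb R^d$ that admits a strong exponential dichotomy with respect to a sequence of norms $\|\cdot\|_n$, $n\in\mathbb Z^+$, and projections $P_n$, $n\in\mathbb Z^+$. Let $(P_n')_{n\in\mathbb Z^+}$ be projections on $\mathbb R^d$ with $P'_{n+1}A_n=A_nP'_n$ for all $n\in\mathbb Z^+$. Then $(A_n)_{n\in\mathbb Z^+}$ admits a strong exponential dichotomy with respect to the norms $\|\cdot\|_n$ and projections $P'_n$ if and only if $\operatorname{Im}P_0=\operatorname{Im}P_0'$.
   Context: $\mathbb Z^+=\{0,1,\dots\}$. $\mathcal A(m,n)=A_{m-1}\cdots A_n$ ($m>n$), $\mathrm{Id}$ ($m=n$), $A_m^{-1}\cdots A_{n-1}^{-1}$ ($m<n$). Strong exponential dichotomy w.r.t. norms $\{\|\cdot\|_n\}$ and projections $P_n$: $A_nP_n=P_{n+1}A_n$ for all $n$, and there exist $K>0$, $a\ge\lambda>0$ with, for $m\ge n$, $x\in\mathbb R^d$, $Q_m=\mathrm{Id}-P_m$: $\|\mathcal A(m,n)P_nx\|_m\le Ke^{-\lambda(m-n)}\|x\|_n$, $\|\mathcal A(n,m)Q_mx\|_n\le Ke^{-\lambda(m-n)}\|x\|_m$, $\|\mathcal A(m,n)x\|_m\le Ke^{a(m-n)}\|x\|_n$, $\|\mathcal A(n,m)x\|_n\le Ke^{a(m-n)}\|x\|_m$. *)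

From HB Require Import structures.
From mathcomp Require Import all_boot all_order all_algebra.
From mathcomp Require Import classical_sets reals.
From mathcomp.analysis Require Import sequences exp.
Set Implicit Arguments. Unset Strict Implicit. Unset Printing Implicit Defensive.
Import Order.TTheory GRing.Theory Num.Theory.
Local Open Scope ring_scope.
Local Open Scope classical_set_scope.

Section Defs.
Variables (R : realType) (d : nat).

Definition is_norm (N : 'cV[R]_d -> R) : Prop :=
  [/\ forall x, 0 <= N x,
      forall x, N x = 0 -> x = 0,
      forall (c : R) x, N (c *: x) = `|c| * N x
    & forall x y, N (x + y) <= N x + N y].

Definition is_proj (P : 'M[R]_d) : Prop := P *m P = P.

Fixpoint fwd (A : nat -> 'M[R]_d) (n k : nat) : 'M[R]_d :=
  match k with
  | 0 => 1%:M
  | k'.+1 => A (n + k')%N *m fwd A n k'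
  end.

(* the cocycle  A(m,n) = A_{m-1}...A_n (m > n), Id (m = n),
   A_m^{-1} ... A_{n-1}^{-1} = (A_{n-1}...A_m)^{-1} (m < n) *)
Definition cocycle (A : nat -> 'M[R]_d) (m n : nat) : 'M[R]_d :=
  if (n <= m)%N then fwd A n (m - n) else invmx (fwd A m (n - m)).

Definition strong_exp_dichotomy (A : nat -> 'M[R]_d)
    (N : nat -> 'cV[R]_d -> R) (P : nat -> 'M[R]_d) : Prop :=
  (forall n, is_proj (P n)) /\
  (forall n, A n *m P n = P n.+1 *m A n) /\
  exists K lam a : R, [/\ 0 < K, 0 < lam, lam <= a &
    forall m n : nat, (n <= m)%N -> forall x : 'cV[R]_d,
      [/\ N m (cocycle A m n *m (P n *m x))
            <= K * expR (- lam * (m - n)%:R) * N n x,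
          N n (cocycle A n m *m ((1%:M - P m) *m x))
            <= K * expR (- lam * (m - n)%:R) * N m x,
          N m (cocycle A m n *m x) <= K * expR (a * (m - n)%:R) * N n x
        & N n (cocycle A n m *m x) <= K * expR (a * (m - n)%:R) * N m x]].

Definition opIm (P : 'M[R]_d) : set 'cV[R]_d := [set y | exists x, y = P *m x].

End Defs.

From HB Require Import structures.
From mathcomp Require Import all_boot all_order all_algebra.
From mathcomp Require Import boolp classical_sets reals topology normedtype.
From mathcomp Require Import sequences exp derive.
From mathcomp Require Import ring lra.
Import Order.TTheory GRing.Theory Num.Theory Num.Def.
Import numFieldTopology.Exports numFieldNormedType.Exports.
Local Open Scope ring_scope.
Local Open Scope classical_set_scope.

(* Both families of projections are conjugated by the cocycle,
   P_n = A(n,0) P_0 A(0,n), so everything is decided at n = 0.  If both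
   dichotomies hold, a vector x of Im P'_0 has a bounded forward orbit, while
   (Id - P_0) x = A(0,m) (Id - P_m) A(m,0) x is then O(e^{-lam m}); hence
   (Id - P_0) x = 0.  Conversely, if Im P_0 = Im P'_0 then P'_n P_n = P_n and
   P_n P'_n = P'_n, so P'_n = P_n + A(n,0) P_0 P'_0 A(0,n) (Id - P_n) is
   bounded uniformly in n (P'_0 is bounded because R^d is finite-dimensional),
   and the estimates for P'_n follow from those for P_n. *)

Definition intertwined {R : realType} {d} (A X : nat -> 'M[R]_d) :=
  forall n, X n.+1 *m A n = A n *m X n.

Section Cocycle.
Context {R : realType} {d : nat} {A : nat -> 'M[R]_d}.

Lemma dichotomy_intertwined {N P} : strong_exp_dichotomy A N P -> intertwined A P.
Proof. by case=> _ [PA _] n; rewrite PA. Qed.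

Lemma intertwined1B {X} : intertwined A X -> intertwined A (fun n => 1%:M - X n).
Proof. by move=> XA n; rewrite mulmxBl mulmxBr mul1mx mulmx1 XA. Qed.

Lemma intertwinedM {X Y} :
  intertwined A X -> intertwined A Y -> intertwined A (fun n => X n *m Y n).
Proof. by move=> XA YA n; rewrite -mulmxA YA !mulmxA XA. Qed.

Hypothesis A_unit : forall n, A n \in unitmx.

Lemma intertwined_eq {X Y} :
  intertwined A X -> intertwined A Y -> X 0%N = Y 0%N -> forall n, X n = Y n.
Proof.
move=> XA YA XY0; elim=> // n IH.
by rewrite -[X n.+1](mulmxK (A_unit n)) -[Y n.+1](mulmxK (A_unit n)) XA YA IH.
Qed.

Lemma fwd_unitmx n k : fwd A n k \in unitmx.
Proof. by elim: k => [|k IH] /=; rewrite ?unitmx1 // unitmx_mul A_unit. Qed.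

Lemma cocycle_id n : cocycle A n n = 1%:M.
Proof. by rewrite /cocycle leqnn subnn. Qed.

Lemma cocycleV m n : cocycle A n m = invmx (cocycle A m n).
Proof.
rewrite /cocycle; case: ltngtP => [nm|mn|->]; last by rewrite subnn invmx1.
- by rewrite invmxK.
- done.
Qed.

Lemma cocycle_unitmx m n : cocycle A m n \in unitmx.
Proof. by rewrite /cocycle; case: leqP; rewrite ?unitmx_inv fwd_unitmx. Qed.

Lemma mulmx_cocycleV m n : cocycle A m n *m cocycle A n m = 1%:M.
Proof. by rewrite [cocycle A n m]cocycleV mulmxV ?cocycle_unitmx. Qed.

Lemma fwd_intertwined {X} n k :
  intertwined A X -> X (n + k)%N *m fwd A n k = fwd A n k *m X n.
Proof.
move=> XA; elim: k => [|k IH] /=; first by rewrite addn0 mul1mx mulmx1.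
by rewrite addnS mulmxA XA -mulmxA IH mulmxA.
Qed.

Lemma cocycle_intertwined {X} m n :
  intertwined A X -> cocycle A m n *m X n = X m *m cocycle A m n.
Proof.
move=> XA; wlog nm : m n / (n <= m)%N => [hwlog|].
  case: (leqP n m) => [/hwlog //|/ltnW mn].
  rewrite cocycleV; set F := cocycle A n m.
  have Fu : F \in unitmx by exact: cocycle_unitmx.
  apply: (canRL (mulmxK Fu)); rewrite -mulmxA -hwlog // mulmxA.
  by rewrite mulVmx // mul1mx.
by rewrite /cocycle nm -{2}(subnKC nm) fwd_intertwined.
Qed.

Lemma intertwined_conj {X} m n :
  intertwined A X -> X m = cocycle A m n *m X n *m cocycle A n m.
Proof.
by move=> XA; rewrite cocycle_intertwined // -mulmxA mulmx_cocycleV mulmx1.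
Qed.

End Cocycle.

Lemma le0_of_expR_decay {R : realType} (t C l : R) : 0 < l ->
  (forall m : nat, t <= C * expR (- l * m%:R)) -> t <= 0.
Proof.
move=> l0 tC; rewrite leNgt; apply/negP => t0.
have C0 : 0 < C by have := tC 0%N; rewrite mulr0 expR0 mulr1; exact: lt_le_trans.
have /archi_boundP : 0 <= C / (t * l) by rewrite ltW // divr_gt0 // mulr_gt0.
set m := archi_bound _; rewrite ltr_pdivrMr ?mulr_gt0 // => Cm.
have := tC m; rewrite mulNr expRN ler_pdivlMr ?expR_gt0 // => tCm.
have em := expR_ge1Dx (l * m%:R).
(* t (1 + l m) <= t e^{l m} <= C < t l m *)
nra.
Qed.

Lemma expR_decay_le {R : realType} (K l v : R) k :
  0 <= K -> 0 <= l -> 0 <= v -> K * expR (- l * k%:R) * v <= K * v.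
Proof.
move=> K0 l0 v0; rewrite ler_wpM2r // ler_piMr // expR_le1.
by rewrite mulNr oppr_le0 mulr_ge0.
Qed.

Lemma mx_entry_le_norm {R : realType} {m n} (M : 'M[R]_(m, n)) i j :
  `|M i j| <= `|M|.
Proof.
by rewrite [leRHS]/normr /= mx_normrE; apply/bigmax_geP; right; exists (i, j).
Qed.

Lemma lipschitz_continuous {R : realType} {V : normedModType R} (f : V -> R)
    (k : R) :
  0 <= k -> (forall v w, `|f v - f w| <= k * `|v - w|) -> continuous f.
Proof.
move=> k0 fk v; apply/cvgrPdist_lt => e e0.
have k1 : 0 < k + 1 by rewrite ltr_wpDl.
near=> w; apply: le_lt_trans (fk v w) _.
have : `|v - w| < e / (k + 1).
  by near: w; apply: cvgr_dist_lt; rewrite ?divr_gt0.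
rewrite ltr_pdivlMr // => vw; apply: le_lt_trans vw.
by rewrite mulrC ler_wpM2l // lerDl.
Unshelve. all: by end_near.
Qed.

Section NormOnColumns.
Context {R : realType} {d : nat} {N : 'cV[R]_d -> R}.
Hypothesis N_norm : is_norm N.

Lemma is_norm_ge0 x : 0 <= N x.
Proof. by case: N_norm. Qed.

Lemma is_norm_eq0 x : N x = 0 -> x = 0.
Proof. by case: N_norm => _ + _ _; apply. Qed.

Lemma is_normZ c x : N (c *: x) = `|c| * N x.
Proof. by case: N_norm. Qed.

Lemma is_normD_le x y : N (x + y) <= N x + N y.
Proof. by case: N_norm. Qed.

Lemma is_normN x : N (- x) = N x.
Proof. by rewrite -scaleN1r is_normZ normrN normr1 mul1r. Qed.

Lemma is_normB_le x y : N (x - y) <= N x + N y.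
Proof. by rewrite -(is_normN y) is_normD_le. Qed.

Lemma is_norm_dist_le x y : `|N x - N y| <= N (x - y).
Proof.
have hx : N x <= N (x - y) + N y by rewrite -{1}(subrK y x) is_normD_le.
have hy : N y <= N (x - y) + N x.
  by rewrite -[N (x - y)]is_normN opprB -{1}(subrK x y) is_normD_le.
by rewrite ler_norml; apply/andP; split; lra.
Qed.

Lemma is_norm_sum_le n (f : 'I_n -> 'cV[R]_d) :
  N (\sum_(j < n) f j) <= \sum_(j < n) N (f j).
Proof.
apply: (big_ind2 (fun a b => N a <= b)) => //.
- by rewrite -(scale0r 0) is_normZ normr0 mul0r.
- by move=> x1 x2 y1 y2 h1 h2; apply: le_trans (is_normD_le _ _) (lerD h1 h2).
Qed.

Lemma is_norm_mulmx_le (T : 'M[R]_d) (y : 'cV[R]_d) (M : R) :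
  (forall j, `|y j 0| <= M) -> N (T *m y) <= (\sum_(j < d) N (col j T)) * M.
Proof.
move=> yM; have -> : T *m y = \sum_(j < d) y j 0 *: col j T.
  apply/matrixP => i k; rewrite !mxE summxE; apply: eq_bigr => j _.
  by rewrite !mxE (ord1 k) mulrC.
apply: le_trans (is_norm_sum_le _ _) _; rewrite mulr_suml; apply: ler_sum => j _.
by rewrite is_normZ mulrC ler_wpM2l ?is_norm_ge0.
Qed.

Let B := \sum_(j < d) N (col j 1%:M).

Lemma is_norm_le_mx_norm x : N x <= B * `|x^T|.
Proof.
have := @is_norm_mulmx_le 1%:M x `|x^T|; rewrite mul1mx; apply=> j.
by have := mx_entry_le_norm x^T 0 j; rewrite mxE.
Qed.

Lemma is_norm_tr_continuous : continuous (fun v : 'rV[R]_d => N v^T).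
Proof.
apply: (@lipschitz_continuous _ _ _ B) => [|v w].
  by apply: sumr_ge0 => j _; exact: is_norm_ge0.
apply: le_trans (is_norm_dist_le _ _) _; rewrite -linearB.
by have := is_norm_le_mx_norm (v - w)^T; rewrite trmxK.
Qed.

(* N attains a positive minimum on the unit sphere of the max norm, which is
   compact. *)
Lemma is_norm_ge_mx_norm : exists2 m : R, 0 < m & forall x, m * `|x^T| <= N x.
Proof.
set S := [set v : 'rV[R]_d | `|v| = 1].
have normalize x : x^T != 0 -> S (`|x^T|^-1 *: x^T).
  by move=> x0; rewrite /S /= normrZ normfV normr_id mulVf ?normr_eq0.
have [S0|S0] := pselect (S !=set0); last first.
  exists 1 => // x; have [->|/normalize xS] := eqVneq x^T 0.
    by rewrite normr0 mulr0 is_norm_ge0.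
  by case: S0; exists (`|x^T|^-1 *: x^T).
have Sc : compact S.
  apply: bounded_closed_compact.
    by exists 1; split => // r r1 v Sv; rewrite /= Sv ltW.
  rewrite (_ : S = normr @^-1` [set r : R | r = 1]) //.
  apply: preimage_closed; last exact: closed_eq.
  by move=> v _; exact: norm_continuous.
have [c /set_mem cS cmin] :=
  compact_EVT_min S0 Sc (continuous_subspaceT is_norm_tr_continuous).
exists (N c^T).
  rewrite lt_neqAle is_norm_ge0 andbT eq_sym; apply/eqP => /is_norm_eq0/eqP.
  by rewrite trmx_eq0 -normr_eq0 cS oner_eq0.
move=> x; have [->|x0] := eqVneq x^T 0; first by rewrite normr0 mulr0 is_norm_ge0.
have r0 : 0 < `|x^T| by rewrite normr_gt0.
have := cmin _ (mem_set (normalize x x0)).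
rewrite linearZ /= trmxK is_normZ ger0_norm ?invr_ge0 //.
by rewrite mulrC ler_pdivlMr.
Qed.

Lemma is_norm_mulmx_bounded (T : 'M[R]_d) :
  exists2 C : R, 0 <= C & forall y, N (T *m y) <= C * N y.
Proof.
have [m m0 mN] := is_norm_ge_mx_norm.
exists ((\sum_(j < d) N (col j T)) / m).
  by rewrite divr_ge0 ?(ltW m0) // sumr_ge0 // => j _; exact: is_norm_ge0.
move=> y; rewrite -mulrA; apply: is_norm_mulmx_le => j.
rewrite mulrC ler_pdivlMr // mulrC; apply: le_trans (mN y).
by rewrite ler_wpM2l ?(ltW m0) //; have := mx_entry_le_norm y^T 0 j; rewrite mxE.
Qed.

End NormOnColumns.

Lemma dichotomy_image_sub {R : realType} {d} (A : nat -> 'M[R]_d) N P Q :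
  (forall n, A n \in unitmx) -> (forall n, is_norm (N n)) ->
  strong_exp_dichotomy A N P -> strong_exp_dichotomy A N Q ->
  opIm (Q 0%N) `<=` opIm (P 0%N).
Proof.
move=> A_unit N_norm sedP [Q_proj [_ [K' [lam' [a' [K'0 lam'0 _ dQ]]]]]].
have P_int := dichotomy_intertwined sedP.
case: sedP => _ [_ [K [lam [a [K0 lam0 _ dP]]]]].
move=> _ [z ->]; set x := Q 0%N *m z.
have Qx : Q 0%N *m x = x by rewrite /x mulmxA Q_proj.
suff /(is_norm_eq0 (N_norm 0%N)) : N 0%N ((1%:M - P 0%N) *m x) = 0.
  by rewrite mulmxBl mul1mx => /subr0_eq ->; exists x.
apply/le_anti; rewrite is_norm_ge0 // andbT.
apply: (@le0_of_expR_decay _ _ (K * (K' * N 0%N x)) lam) => // m.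
have -> : (1%:M - P 0%N) *m x
    = cocycle A 0 m *m ((1%:M - P m) *m (cocycle A m 0 *m x)).
  rewrite mulmxA (cocycle_intertwined A_unit 0 m (intertwined1B P_int)) /=.
  by rewrite -mulmxA (mulmxA (cocycle A 0 m)) mulmx_cocycleV // mul1mx.
have Q_bounded : N m (cocycle A m 0 *m x) <= K' * N 0%N x.
  have [+ _ _ _] := dQ m 0%N (leq0n m) x.
  rewrite subn0 Qx => /le_trans; apply.
  by apply: expR_decay_le; [exact: ltW | exact: ltW | exact: is_norm_ge0].
have [_ + _ _] := dP m 0%N (leq0n m) (cocycle A m 0 *m x).
rewrite subn0 => /le_trans; apply.
by rewrite mulrAC ler_wpM2r ?expR_ge0 // ler_wpM2l ?(ltW K0).
Qed.

Lemma proj_mul_image_sub {R : realType} {d} (P Q : 'M[R]_d) :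
  is_proj P -> opIm Q `<=` opIm P -> P *m Q = Q.
Proof.
move=> P_proj QP; have col_eq j : col j (P *m Q) = col j Q.
  rewrite !colE -mulmxA.
  by have [w ->] := QP _ (ex_intro _ (delta_mx j 0) erefl); rewrite mulmxA P_proj.
by apply/matrixP => i j; have /colP/(_ i) := col_eq j; rewrite !mxE.
Qed.

Section SameImage.
Context {R : realType} {d : nat} {A : nat -> 'M[R]_d} {N : nat -> 'cV[R]_d -> R}.
Context {P P' : nat -> 'M[R]_d} {K lam a C : R}.
Hypothesis A_unit : forall n, A n \in unitmx.
Hypothesis N_norm : forall n, is_norm (N n).
Hypothesis P_proj : forall n, is_proj (P n).
Hypothesis P'_proj : forall n, is_proj (P' n).
Hypothesis P_int : intertwined A P.
Hypothesis P'_int : intertwined A P'.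
Hypothesis K_gt0 : 0 < K.
Hypothesis lam_gt0 : 0 < lam.
Hypothesis lam_le_a : lam <= a.
Hypothesis P_dich : forall m n : nat, (n <= m)%N -> forall x : 'cV[R]_d,
  [/\ N m (cocycle A m n *m (P n *m x)) <= K * expR (- lam * (m - n)%:R) * N n x,
      N n (cocycle A n m *m ((1%:M - P m) *m x))
        <= K * expR (- lam * (m - n)%:R) * N m x,
      N m (cocycle A m n *m x) <= K * expR (a * (m - n)%:R) * N n x
    & N n (cocycle A n m *m x) <= K * expR (a * (m - n)%:R) * N m x].
Hypothesis C_ge0 : 0 <= C.
Hypothesis P'0_bounded : forall y, N 0%N (P' 0%N *m y) <= C * N 0%N y.
Hypothesis same_image : opIm (P 0%N) = opIm (P' 0%N).

Lemma P'_mul_P n : P' n *m P n = P n.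
Proof.
apply: (intertwined_eq A_unit (intertwinedM P'_int P_int) P_int) => /=.
by apply: proj_mul_image_sub; rewrite ?same_image.
Qed.

Lemma P_mul_P' n : P n *m P' n = P' n.
Proof.
apply: (intertwined_eq A_unit (intertwinedM P_int P'_int) P'_int) => /=.
by apply: proj_mul_image_sub; rewrite ?same_image.
Qed.

Let K_ge0 : 0 <= K := ltW K_gt0.
Let N_ge0 n y : 0 <= N n y := is_norm_ge0 (N_norm n) y.

Let decay_le k m y : K * expR (- lam * k%:R) * N m y <= K * N m y.
Proof. exact: expR_decay_le K_ge0 (ltW lam_gt0) (N_ge0 m y). Qed.

Lemma P_norm_le n y : N n (P n *m y) <= K * N n y.
Proof.
have [+ _ _ _] := P_dich _ _ (leqnn n) y.
by rewrite cocycle_id mul1mx subnn mulr0 expR0 mulr1.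
Qed.

Lemma stable_from0_le n y : N n (cocycle A n 0 *m (P 0%N *m y)) <= K * N 0%N y.
Proof.
have [+ _ _ _] := P_dich _ _ (leq0n n) y.
by rewrite subn0 => /le_trans; apply; apply: decay_le.
Qed.

Lemma unstable_to0_le n y :
  N 0%N (cocycle A 0 n *m ((1%:M - P n) *m y)) <= K * N n y.
Proof.
have [_ + _ _] := P_dich _ _ (leq0n n) y.
by rewrite subn0 => /le_trans; apply; apply: decay_le.
Qed.

Let D := K + K * C * K.

Let D_ge0 : 0 <= D.
Proof. by rewrite addr_ge0 ?mulr_ge0 ?K_ge0. Qed.

Lemma P'_norm_le n y : N n (P' n *m y) <= D * N n y.
Proof.
set w := cocycle A 0 n *m ((1%:M - P n) *m y).
have -> : P' n *m y = P n *m y + cocycle A n 0 *m (P 0%N *m (P' 0%N *m w)).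
  have -> : P' n *m y = P n *m y + P' n *m ((1%:M - P n) *m y).
    by rewrite mulmxA mulmxBr mulmx1 P'_mul_P mulmxBl addrC subrK.
  congr (_ + _); rewrite -P_mul_P' (intertwined_conj A_unit n 0 P'_int) /w.
  by rewrite !mulmxA -(cocycle_intertwined A_unit n 0 P_int).
apply: le_trans (is_normD_le (N_norm n) _ _) _.
rewrite /D mulrDl; apply: lerD; first exact: P_norm_le.
apply: le_trans (stable_from0_le _ _) _; rewrite -!mulrA ler_wpM2l //.
apply: le_trans (P'0_bounded _) _; rewrite ler_wpM2l //.
exact: unstable_to0_le.
Qed.

Lemma compl_P'_norm_le n y : N n ((1%:M - P' n) *m y) <= (1 + D) * N n y.
Proof.
rewrite mulmxBl mul1mx mulrDl mul1r.
by apply: le_trans (is_normB_le (N_norm n) _ _) _; rewrite lerD2l P'_norm_le.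
Qed.

Lemma dichotomy_of_same_image : strong_exp_dichotomy A N P'.
Proof.
split; first exact: P'_proj.
split; first by move=> n; rewrite P'_int.
have D1_ge1 : 1 <= 1 + D by rewrite lerDl.
have rescale e v w : 0 <= e -> w <= (1 + D) * v -> K * e * w <= K * (1 + D) * e * v.
  move=> e0 wv; have -> : K * (1 + D) * e * v = K * e * ((1 + D) * v) by ring.
  by rewrite ler_wpM2l ?mulr_ge0.
exists (K * (1 + D)), lam, a; split => // [|m n nm x].
  by rewrite mulr_gt0 //; apply: lt_le_trans D1_ge1.
have [_ unstable growth_fwd growth_bwd] := P_dich _ _ nm x.
split.
- rewrite -P_mul_P' -mulmxA.
  have [+ _ _ _] := P_dich _ _ nm (P' n *m x) => /le_trans; apply.
  apply: rescale; first exact: expR_ge0.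
  by apply: le_trans (P'_norm_le _ _) _; rewrite ler_wpM2r // lerDr.
- have -> : (1%:M - P' m) *m x = (1%:M - P' m) *m ((1%:M - P m) *m x).
    rewrite mulmxA mulmxBr mulmx1 [(1%:M - P' m) *m P m]mulmxBl mul1mx.
    by rewrite P'_mul_P subrr subr0.
  rewrite mulmxA (cocycle_intertwined A_unit n m (intertwined1B P'_int)) -mulmxA /=.
  apply: le_trans (compl_P'_norm_le _ _) _.
  have -> : K * (1 + D) * expR (- lam * (m - n)%:R) * N m x
    = (1 + D) * (K * expR (- lam * (m - n)%:R) * N m x) by ring.
  by apply: ler_wpM2l; [exact: le_trans D1_ge1 | exact: unstable].
- apply: le_trans growth_fwd _; apply: rescale; first exact: expR_ge0.
  by rewrite ler_peMl.
- apply: le_trans growth_bwd _; apply: rescale; first exact: expR_ge0.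
  by rewrite ler_peMl.
Qed.

End SameImage.

Theorem lemma7p2 (R : realType) (d : nat) (A : nat -> 'M[R]_d)
    (N : nat -> 'cV[R]_d -> R) (P P' : nat -> 'M[R]_d) :
  (forall n, A n \in unitmx) ->
  (forall n, is_norm (N n)) ->
  strong_exp_dichotomy A N P ->
  (forall n, is_proj (P' n)) ->
  (forall n, P' n.+1 *m A n = A n *m P' n) ->
  (strong_exp_dichotomy A N P' <-> opIm (P 0%N) = opIm (P' 0%N)).
Proof.
move=> A_unit N_norm sedP P'_proj P'_int; split.
  by move=> sedP'; apply/seteqP; split; exact: dichotomy_image_sub.
move=> same_image; have P_int := dichotomy_intertwined sedP.
case: sedP => P_proj [_ [K [lam [a [K_gt0 lam_gt0 lam_le_a P_dich]]]]].
have [C C_ge0 P'0_bounded] := is_norm_mulmx_bounded (N_norm 0%N) (P' 0%N).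
exact: (dichotomy_of_same_image A_unit N_norm P_proj P'_proj P_int P'_int K_gt0 lam_gt0
  lam_le_a P_dich C_ge0 P'0_bounded same_image).
Qed.
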